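(* For $n\ge3$, the set $\mathcal G$ is a proper subset of $\mathcal S_1$, the class of $n\times n$ stochastic Sarymsakov matrices.
   Context: Let $\mathcal N=\{1,\ldots,n\}$. A matrix is stochastic if it is entrywise nonnegative with row sums $1$; it is SIA if $\lim_{m\to\infty}P^m=\mathbf 1c^T$ for some nonnegative $c$ with entries summing to $1$. For stochastic $P$ and $\mathcal A\subseteq\mathcal N$, $F_P(\mathcal A)=\{j:\ p_{ij}>0\text{ for some } i\in\mathcal A\}$. $\mathcal S_1$ is the set of stochastic $n\times n$ matrices $P$ (Sarymsakov matrices) such that for any disjoint nonempty $\mathcal A,\tilde{\mathcal A}\subseteq\mathcal N$, either $F_P(\mathcal A)\cap F_P(\tilde{\mathcal A})\neq\emptyset$, or $F_P(\mathcal A)\cap F_P(\tilde{\mathcal A})=\emptyset$ and $|F_P(\mathcal A)\cup F_P(\tilde{\mathcal A})|>|\mathcal A\cup\tilde{\mathcal A}|$. $\mathcal G$ is the set of $n\times n$ SIA matrices $P$ such that $QP$ is SIA for every $n\times n$ SIA matrix $Q$. *)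

(* An n x n matrix is represented as a function nat -> nat -> R, of which only
   the entries with indices < n are relevant (indices 0..n-1 stand for 1..n).
   Subsets of N = {0..n-1} are boolean predicates on nat, restricted to i < n. *)
From Stdlib Require Import Reals List Arith.
Open Scope R_scope.

Definition mat := nat -> nat -> R.

Fixpoint rsum (n : nat) (f : nat -> R) : R :=
  match n with O => 0 | S k => rsum k f + f k end.

Definition mmul (n : nat) (A B : mat) : mat :=
  fun i j => rsum n (fun k => A i k * B k j).

Definition mid : mat := fun i j => if Nat.eqb i j then 1 else 0.

Fixpoint mpow (n : nat) (A : mat) (m : nat) : mat :=
  match m with O => mid | S k => mmul n (mpow n A k) A end.

Definition stochastic (n : nat) (P : mat) : Prop :=
  (forall i j, (i < n)%nat -> (j < n)%nat -> 0 <= P i j) /\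
  (forall i, (i < n)%nat -> rsum n (P i) = 1).

Definition SIA (n : nat) (P : mat) : Prop :=
  stochastic n P /\
  exists c : nat -> R,
    (forall j, (j < n)%nat -> 0 <= c j) /\ rsum n c = 1 /\
    (forall i j, (i < n)%nat -> (j < n)%nat ->
       Un_cv (fun m => mpow n P m i j) (c j)).

Definition posb (x : R) : bool := if Rlt_dec 0 x then true else false.

Definition F (n : nat) (P : mat) (A : nat -> bool) : nat -> bool :=
  fun j => andb (Nat.ltb j n)
           (existsb (fun i => andb (A i) (posb (P i j))) (seq 0 n)).

Definition card (n : nat) (A : nat -> bool) : nat :=
  length (filter A (seq 0 n)).

Definition nonempty (n : nat) (A : nat -> bool) : Prop :=
  exists i, (i < n)%nat /\ A i = true.

Definition disjoint (n : nat) (A B : nat -> bool) : Prop :=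
  forall i, (i < n)%nat -> andb (A i) (B i) = false.

Definition union (A B : nat -> bool) : nat -> bool := fun i => orb (A i) (B i).
Definition inter (A B : nat -> bool) : nat -> bool := fun i => andb (A i) (B i).

Definition S1 (n : nat) (P : mat) : Prop :=
  stochastic n P /\
  forall A At : nat -> bool,
    nonempty n A -> nonempty n At -> disjoint n A At ->
    nonempty n (inter (F n P A) (F n P At)) \/
    (~ nonempty n (inter (F n P A) (F n P At)) /\
     (card n (union (F n P A) (F n P At)) > card n (union A At))%nat).

Definition G (n : nat) (P : mat) : Prop :=
  SIA n P /\ forall Q : mat, SIA n Q -> SIA n (mmul n Q P).

From Stdlib Require Import Reals List Arith Lia Lra Classical Bool FunctionalExtensionality.
Open Scope R_scope.

(** Say the Sarymsakov condition fails for disjoint nonempty A, Ã: their images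
    F(A), F(Ã) are disjoint and |F(A) ∪ F(Ã)| <= |A ∪ Ã|.  If P is in G, no two
    points x ∈ A, y ∈ Ã lie outside F(A): otherwise the map sending F(A) to x and
    everything else to y gives an SIA matrix Q with Q² of rank one, while QP has
    the two disjoint closed classes F(A) and F(Ã).  The same holds with the roles
    of A and Ã exchanged, so A ∪ Ã ⊆ F(A) ∪ F(Ã), and counting forces equality:
    P either maps A into A and Ã into Ã, or swaps them, and then P itself is not
    SIA.  For the strictness, the matrix below with p_{1,0} = 1,
    p_{2,1} = p_{2,2} = 1/2 and all other rows uniform is Sarymsakov, while the
    singletons {1}, {2} violate the condition on G derived above. *)

Lemma rsum_ext n f g :
  (forall k, (k < n)%nat -> f k = g k) -> rsum n f = rsum n g.
Proof.
  induction n as [|n IH]; intros Hfg; simpl; [reflexivity|].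
  rewrite IH by (intros k Hk; apply Hfg; lia). rewrite Hfg by lia. reflexivity.
Qed.

Lemma rsum_zero n f : (forall k, (k < n)%nat -> f k = 0) -> rsum n f = 0.
Proof.
  induction n as [|n IH]; intros Hf; simpl; [reflexivity|].
  rewrite IH by (intros k Hk; apply Hf; lia). rewrite Hf by lia. ring.
Qed.

Lemma rsum_plus n f g : rsum n (fun k => f k + g k) = rsum n f + rsum n g.
Proof. induction n as [|n IH]; simpl; [ring|rewrite IH; ring]. Qed.

Lemma rsum_const n c : rsum n (fun _ => c) = INR n * c.
Proof. induction n as [|n IH]; cbn [rsum]; [simpl; ring|rewrite IH, S_INR; ring]. Qed.

Lemma rsum_kronecker n x h : (x < n)%nat ->
  rsum n (fun k => (if Nat.eqb x k then 1 else 0) * h k) = h x.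
Proof.
  induction n as [|n IH]; intros Hx; simpl; [lia|].
  destruct (Nat.eqb_spec x n) as [<-|Hne].
  - rewrite rsum_zero; [ring|]. intros k Hk. destruct (Nat.eqb_spec x k); [lia|ring].
  - rewrite IH by lia. ring.
Qed.

Lemma rsum_indicator n x : (x < n)%nat ->
  rsum n (fun k => if Nat.eqb x k then 1 else 0) = 1.
Proof.
  intros Hx. transitivity (rsum n (fun k => (if Nat.eqb x k then 1 else 0) * 1)).
  - apply rsum_ext. intros k _. ring.
  - exact (rsum_kronecker n x (fun _ => 1) Hx).
Qed.

Lemma rsum_pos_exists n g : 0 < rsum n g -> exists j, (j < n)%nat /\ 0 < g j.
Proof.
  induction n as [|n IH]; simpl; intros Hpos; [lra|].
  destruct (Rlt_dec 0 (g n)) as [Hg|Hg]; [exists n; split; [lia|exact Hg]|].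
  destruct IH as [j [Hj Hgj]]; [lra|]. exists j. split; [lia|exact Hgj].
Qed.

Definition subset n (U V : nat -> bool) : Prop :=
  forall i, (i < n)%nat -> U i = true -> V i = true.

Lemma not_subset_exists n U V :
  ~ subset n U V -> exists i, (i < n)%nat /\ U i = true /\ V i = false.
Proof.
  intros Hns. apply NNPP. intros Hno. apply Hns. intros i Hi HU.
  destruct (V i) eqn:HV; [reflexivity|]. exfalso. apply Hno. exists i. auto.
Qed.

Lemma disjoint_sym n U V : disjoint n U V -> disjoint n V U.
Proof. intros H i Hi. rewrite andb_comm. exact (H i Hi). Qed.

Lemma disjoint_of_empty_inter n U V : ~ nonempty n (inter U V) -> disjoint n U V.
Proof.
  intros H i Hi. destruct (U i && V i) eqn:E; [|reflexivity].
  exfalso. apply H. exists i. split; [exact Hi|exact E].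
Qed.

Lemma empty_inter_of_disjoint n U V : disjoint n U V -> ~ nonempty n (inter U V).
Proof.
  intros Hdis [i [Hi H]]. change (U i && V i = true) in H.
  rewrite (Hdis i Hi) in H. discriminate.
Qed.

Lemma inter_comm U V : inter U V = inter V U.
Proof. apply functional_extensionality. intros i. apply andb_comm. Qed.

Lemma union_comm U V : union U V = union V U.
Proof. apply functional_extensionality. intros i. apply orb_comm. Qed.

Lemma filter_length_le (S T : nat -> bool) l :
  (forall x, In x l -> S x = true -> T x = true) ->
  (length (filter S l) <= length (filter T l))%nat.
Proof.
  induction l as [|a l IH]; simpl; intros H; [lia|].
  specialize (IH (fun x Hx => H x (or_intror Hx))).
  destruct (S a) eqn:ES; [rewrite (H a (or_introl eq_refl) ES)|destruct (T a)]; simpl; lia.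
Qed.

Lemma filter_length_lt (S T : nat -> bool) l :
  (forall x, In x l -> S x = true -> T x = true) ->
  (exists x, In x l /\ T x = true /\ S x = false) ->
  (length (filter S l) < length (filter T l))%nat.
Proof.
  induction l as [|a l IH]; simpl; intros H [x [Hx [HT HS]]]; [contradiction|].
  assert (Hle := filter_length_le S T l (fun y Hy => H y (or_intror Hy))).
  destruct Hx as [<-|Hx].
  - rewrite HT, HS. simpl. lia.
  - assert (Hlt : (length (filter S l) < length (filter T l))%nat).
    { apply IH; [intros y Hy; apply H; right; exact Hy|exists x; auto]. }
    destruct (S a) eqn:ES; [rewrite (H a (or_introl eq_refl) ES)|destruct (T a)]; simpl; lia.
Qed.

Lemma card_lt n U V : subset n U V ->
  (exists i, (i < n)%nat /\ V i = true /\ U i = false) -> (card n U < card n V)%nat.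
Proof.
  intros Hsub [i [Hi [HV HU]]]. unfold card. apply filter_length_lt.
  - intros x Hx. apply in_seq in Hx. apply Hsub. lia.
  - exists i. rewrite in_seq. split; [lia|auto].
Qed.

Lemma subset_of_card_le n U V : subset n U V -> (card n V <= card n U)%nat -> subset n V U.
Proof.
  intros Hsub Hcard i Hi HV. destruct (U i) eqn:HU; [reflexivity|].
  assert (card n U < card n V)%nat by (apply card_lt; eauto). lia.
Qed.

Lemma subset_of_disjoint_cover n U V C D :
  disjoint n U V -> subset n D V -> subset n (union U V) (union C D) -> subset n U C.
Proof.
  intros Hdis HD Hcov i Hi HU.
  assert (HCD : union C D i = true) by (apply Hcov; [exact Hi|unfold union; rewrite HU; reflexivity]).
  unfold union in HCD. destruct (C i) eqn:HC; [reflexivity|]. simpl in HCD.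
  specialize (Hdis i Hi). rewrite HU, (HD i Hi HCD) in Hdis. discriminate.
Qed.

Lemma disjoint_supersets_eq n U V C D :
  disjoint n U V -> subset n C U -> subset n D V ->
  (card n (union U V) <= card n (union C D))%nat -> subset n U C /\ subset n V D.
Proof.
  intros Hdis HC HD Hcard.
  assert (Hcov : subset n (union U V) (union C D)).
  { apply subset_of_card_le; [|exact Hcard]. intros i Hi HCD. unfold union in *.
    apply orb_true_iff in HCD as [HCi|HDi]; apply orb_true_iff; auto. }
  split.
  - exact (subset_of_disjoint_cover n U V C D Hdis HD Hcov).
  - rewrite union_comm, (union_comm C) in Hcov.
    exact (subset_of_disjoint_cover n V U D C (disjoint_sym n U V Hdis) HC Hcov).
Qed.

Lemma F_spec n P X j : F n P X j = true <->
  (j < n)%nat /\ exists i, (i < n)%nat /\ X i = true /\ 0 < P i j.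
Proof.
  unfold F. rewrite andb_true_iff, Nat.ltb_lt, existsb_exists. split.
  - intros [Hj [i [Hi H]]]. apply in_seq in Hi. apply andb_true_iff in H as [HX Hpos].
    unfold posb in Hpos. destruct (Rlt_dec 0 (P i j)); [|discriminate].
    split; [exact Hj|]. exists i. repeat split; [lia|assumption|assumption].
  - intros [Hj [i [Hi [HX Hpos]]]]. split; [exact Hj|]. exists i. split; [apply in_seq; lia|].
    rewrite HX. unfold posb. destruct (Rlt_dec 0 (P i j)); [reflexivity|contradiction].
Qed.

Lemma F_nonempty n P X : stochastic n P -> nonempty n X -> nonempty n (F n P X).
Proof.
  intros [_ Hrow] [x [Hx HX]].
  destruct (rsum_pos_exists n (P x)) as [j [Hj Hpos]]; [rewrite (Hrow x Hx); lra|].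
  exists j. split; [exact Hj|]. apply F_spec. split; [exact Hj|].
  exists x. repeat split; assumption.
Qed.

Definition is_singleton n (X : nat -> bool) k : Prop :=
  forall i, (i < n)%nat -> (X i = true <-> i = k).

Lemma F_singleton n P X k j : (k < n)%nat -> is_singleton n X k ->
  (F n P X j = true <-> (j < n)%nat /\ 0 < P k j).
Proof.
  intros Hk HX. rewrite F_spec. split.
  - intros [Hj [i [Hi [HXi Hpos]]]]. apply (HX i Hi) in HXi. subst i. split; assumption.
  - intros [Hj Hpos]. split; [exact Hj|]. exists k. repeat split; try assumption.
    apply (HX k Hk). reflexivity.
Qed.

Definition rows_supported n (M : mat) (U V : nat -> bool) : Prop :=
  forall i j, (i < n)%nat -> (j < n)%nat -> U i = true -> V j = false -> M i j = 0.

Lemma rows_supported_F n P X : stochastic n P -> rows_supported n P X (F n P X).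
Proof.
  intros [Hnn _] i j Hi Hj HX HF. destruct (Rlt_dec 0 (P i j)) as [Hpos|Hpos].
  - assert (F n P X j = true).
    { apply F_spec. split; [exact Hj|]. exists i. repeat split; assumption. }
    congruence.
  - specialize (Hnn i j Hi Hj). lra.
Qed.

Lemma rows_supported_weaken n M U V W :
  rows_supported n M U V -> subset n V W -> rows_supported n M U W.
Proof.
  intros HM HVW i j Hi Hj HU HW. apply HM; try assumption.
  destruct (V j) eqn:HV; [|reflexivity]. rewrite (HVW j Hj HV) in HW. discriminate.
Qed.

Lemma rows_supported_mmul n A B U V W :
  rows_supported n A U V -> rows_supported n B V W -> rows_supported n (mmul n A B) U W.
Proof.
  intros HA HB i j Hi Hj HU HW. apply rsum_zero. intros k Hk.
  destruct (V k) eqn:HV.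
  - rewrite (HB k j Hk Hj HV HW). ring.
  - rewrite (HA i k Hi Hk HU HV). ring.
Qed.

Lemma rows_supported_mpow n M (U : nat -> nat -> bool) :
  (forall m, rows_supported n M (U m) (U (S m))) ->
  forall m, rows_supported n (mpow n M m) (U 0%nat) (U m).
Proof.
  intros HM m. induction m as [|m IH]; simpl.
  - intros i j _ _ Hi Hj. unfold mid. destruct (Nat.eqb_spec i j) as [<-|]; [congruence|reflexivity].
  - exact (rows_supported_mmul n _ _ _ _ _ IH (HM m)).
Qed.

Lemma limit_of_frequently_zero u c :
  Un_cv u c -> (forall N, exists m, (m >= N)%nat /\ u m = 0) -> c = 0.
Proof.
  intros Hc Hfreq. destruct (Req_dec c 0) as [|Hne]; [assumption|exfalso].
  destruct (Hc (Rabs c)) as [N HN]; [apply Rabs_pos_lt; exact Hne|].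
  destruct (Hfreq N) as [m [Hm Hu]]. specialize (HN m Hm). rewrite Hu in HN.
  unfold R_dist in HN. rewrite Rminus_0_l, Rabs_Ropp in HN. lra.
Qed.

Lemma not_SIA_of_frequently_zero_columns n M :
  (forall j, (j < n)%nat -> exists i, (i < n)%nat /\
     forall N, exists m, (m >= N)%nat /\ mpow n M m i j = 0) -> ~ SIA n M.
Proof.
  intros Hcol [_ [c [_ [Hsum Hlim]]]].
  rewrite rsum_zero in Hsum; [lra|]. intros j Hj.
  destruct (Hcol j Hj) as [i [Hi Hfreq]].
  exact (limit_of_frequently_zero _ _ (Hlim i j Hi Hj) Hfreq).
Qed.

Lemma not_SIA_of_closed_pair n M U V u v :
  (u < n)%nat -> U u = true -> (v < n)%nat -> V v = true -> disjoint n U V ->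
  rows_supported n M U U -> rows_supported n M V V -> ~ SIA n M.
Proof.
  intros Hu HUu Hv HVv Hdis HU HV. apply not_SIA_of_frequently_zero_columns.
  intros j Hj. destruct (U j) eqn:HUj.
  - assert (HVj : V j = false) by (specialize (Hdis j Hj); rewrite HUj in Hdis; exact Hdis).
    exists v. split; [exact Hv|]. intros N. exists N. split; [lia|].
    exact (rows_supported_mpow n M (fun _ => V) (fun _ => HV) N v j Hv Hj HVv HVj).
  - exists u. split; [exact Hu|]. intros N. exists N. split; [lia|].
    exact (rows_supported_mpow n M (fun _ => U) (fun _ => HU) N u j Hu Hj HUu HUj).
Qed.

Lemma not_SIA_of_swapped_pair n M U V u :
  (u < n)%nat -> U u = true -> disjoint n U V ->
  rows_supported n M U V -> rows_supported n M V U -> ~ SIA n M.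
Proof.
  intros Hu HUu Hdis HUV HVU.
  set (W := fun m : nat => if Nat.even m then U else V).
  assert (HW : forall m, rows_supported n M (W m) (W (S m))).
  { intros m. unfold W. rewrite Nat.even_succ, <- Nat.negb_even.
    destruct (Nat.even m); assumption. }
  apply not_SIA_of_frequently_zero_columns. intros j Hj.
  exists u. split; [exact Hu|]. intros N. destruct (U j) eqn:HUj.
  - exists (S (2 * N)). split; [lia|].
    apply (rows_supported_mpow n M W HW _ u j Hu Hj HUu).
    unfold W. rewrite Nat.even_succ, <- Nat.negb_even, Nat.even_even. simpl.
    specialize (Hdis j Hj). rewrite HUj in Hdis. exact Hdis.
  - exists (2 * N)%nat. split; [lia|].
    apply (rows_supported_mpow n M W HW _ u j Hu Hj HUu).
    unfold W. rewrite Nat.even_even. exact HUj.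
Qed.

Definition fun_mat (f : nat -> nat) : mat :=
  fun i j => if Nat.eqb (f i) j then 1 else 0.

Lemma mmul_fun_mat n f M i j : (f i < n)%nat -> mmul n (fun_mat f) M i j = M (f i) j.
Proof. intros Hf. exact (rsum_kronecker n (f i) (fun k => M k j) Hf). Qed.

Lemma mpow_fun_mat n f m i j : (forall k, (f k < n)%nat) -> (i < n)%nat ->
  mpow n (fun_mat f) m i j = fun_mat (Nat.iter m f) i j.
Proof.
  intros Hf Hi. revert j. induction m as [|m IH]; intros j; [reflexivity|].
  change (rsum n (fun k => mpow n (fun_mat f) m i k * fun_mat f k j)
          = fun_mat (Nat.iter (S m) f) i j).
  rewrite (rsum_ext n _ (fun k => fun_mat (Nat.iter m f) i k * fun_mat f k j))
    by (intros k _; rewrite IH; reflexivity).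
  apply (rsum_kronecker n (Nat.iter m f i) (fun k => fun_mat f k j)).
  destruct m; [exact Hi|apply Hf].
Qed.

Lemma fun_mat_SIA n f t : (forall i, (f i < n)%nat) -> (forall i, f (f i) = t) ->
  SIA n (fun_mat f).
Proof.
  intros Hf Hft. assert (Ht : (t < n)%nat) by (rewrite <- (Hft 0%nat); apply Hf).
  split; [split|].
  - intros i j _ _. unfold fun_mat. destruct (Nat.eqb (f i) j); lra.
  - intros i _. apply rsum_indicator. apply Hf.
  - exists (fun_mat (fun _ => t) 0%nat). split; [|split].
    + intros j _. unfold fun_mat. destruct (Nat.eqb t j); lra.
    + apply rsum_indicator. exact Ht.
    + intros i j Hi _ eps Heps. exists 2%nat. intros m Hm.
      rewrite mpow_fun_mat by assumption.
      destruct m as [|[|m]]; [lia|lia|]. unfold R_dist, fun_mat. simpl. rewrite Hft.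
      rewrite Rminus_diag, Rabs_R0. exact Heps.
Qed.

(* Since x, y lie outside F(X), the square of the collapsing map is constant. *)
Lemma collapse_left_factor n P X Y x y :
  stochastic n P -> (x < n)%nat -> (y < n)%nat -> X x = true -> Y y = true ->
  F n P X x = false -> F n P X y = false -> disjoint n (F n P X) (F n P Y) ->
  exists Q, SIA n Q /\ ~ SIA n (mmul n Q P).
Proof.
  intros HP Hx Hy HXx HYy HFx HFy Hdis.
  set (f := fun i => if F n P X i then x else y).
  assert (Hf : forall i, (f i < n)%nat) by (intros i; unfold f; destruct (F n P X i); assumption).
  exists (fun_mat f). split.
  - apply (fun_mat_SIA n f y Hf). intros i. unfold f.
    destruct (F n P X i); rewrite ?HFx, ?HFy; reflexivity.
  - destruct (F_nonempty n P X HP) as [u [Hu HFu]]; [exists x; split; assumption|].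
    destruct (F_nonempty n P Y HP) as [v [Hv HFv]]; [exists y; split; assumption|].
    apply (not_SIA_of_closed_pair n _ (F n P X) (F n P Y) u v Hu HFu Hv HFv Hdis).
    + intros i j Hi Hj HFi HFj. rewrite mmul_fun_mat by apply Hf. unfold f. rewrite HFi.
      exact (rows_supported_F n P X HP x j Hx Hj HXx HFj).
    + intros i j Hi Hj HFi HFj. rewrite mmul_fun_mat by apply Hf. unfold f.
      assert (HXi : F n P X i = false).
      { specialize (Hdis i Hi). rewrite HFi, andb_true_r in Hdis. exact Hdis. }
      rewrite HXi. exact (rows_supported_F n P Y HP y j Hy Hj HYy HFj).
Qed.

Lemma G_image_covers n P X Y : G n P -> disjoint n (F n P X) (F n P Y) ->
  subset n X (F n P X) \/ subset n Y (F n P X).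
Proof.
  intros [[HP _] HG] Hdis.
  destruct (classic (subset n X (F n P X))) as [HX|HX]; [left; exact HX|right].
  apply NNPP. intros HY.
  destruct (not_subset_exists _ _ _ HX) as [x [Hx [HXx HFx]]].
  destruct (not_subset_exists _ _ _ HY) as [y [Hy [HYy HFy]]].
  destruct (collapse_left_factor n P X Y x y) as [Q [HQ HQP]]; try assumption.
  exact (HQP (HG Q HQ)).
Qed.

Lemma G_subset_S1 n P : G n P -> S1 n P.
Proof.
  intros HG. assert (HS : SIA n P) by apply HG. assert (HP : stochastic n P) by apply HS.
  split; [exact HP|]. intros A At HA HAt Hdis.
  destruct (classic (nonempty n (inter (F n P A) (F n P At)))) as [Hne|Hempty];
    [left; exact Hne|right; split; [exact Hempty|]].
  apply Nat.nle_gt. intros Hle.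
  assert (HdisF := disjoint_of_empty_inter _ _ _ Hempty).
  destruct (G_image_covers n P A At HG HdisF) as [HAA|HAtA];
    destruct (G_image_covers n P At A HG (disjoint_sym _ _ _ HdisF)) as [HAtAt|HAAt].
  - destruct (disjoint_supersets_eq n _ _ A At HdisF HAA HAtAt Hle) as [HFA HFAt].
    destruct HA as [a [Ha HAa]]. destruct HAt as [b [Hb HAtb]].
    exact (not_SIA_of_closed_pair n P A At a b Ha HAa Hb HAtb Hdis
             (rows_supported_weaken _ _ _ _ _ (rows_supported_F n P A HP) HFA)
             (rows_supported_weaken _ _ _ _ _ (rows_supported_F n P At HP) HFAt) HS).
  - destruct HA as [a [Ha HAa]]. specialize (HdisF a Ha).
    rewrite (HAA a Ha HAa), (HAAt a Ha HAa) in HdisF. discriminate.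
  - destruct HAt as [b [Hb HAtb]]. specialize (HdisF b Hb).
    rewrite (HAtA b Hb HAtb), (HAtAt b Hb HAtb) in HdisF. discriminate.
  - rewrite (union_comm A) in Hle.
    destruct (disjoint_supersets_eq n _ _ At A HdisF HAtA HAAt Hle) as [HFA HFAt].
    destruct HA as [a [Ha HAa]].
    exact (not_SIA_of_swapped_pair n P A At a Ha HAa Hdis
             (rows_supported_weaken _ _ _ _ _ (rows_supported_F n P A HP) HFA)
             (rows_supported_weaken _ _ _ _ _ (rows_supported_F n P At HP) HFAt) HS).
Qed.

Definition sarymsakov_pair n P (A At : nat -> bool) : Prop :=
  nonempty n (inter (F n P A) (F n P At)) \/
  (~ nonempty n (inter (F n P A) (F n P At)) /\
   (card n (union (F n P A) (F n P At)) > card n (union A At))%nat).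

Lemma sarymsakov_pair_sym n P A At : sarymsakov_pair n P A At -> sarymsakov_pair n P At A.
Proof.
  unfold sarymsakov_pair.
  rewrite (inter_comm (F n P At)), (union_comm (F n P At)), (union_comm At). auto.
Qed.

Lemma disjoint_split_pair n k l A B :
  (forall i, (i < n)%nat -> A i = true -> i = k \/ i = l) ->
  (forall i, (i < n)%nat -> B i = true -> i = k \/ i = l) ->
  nonempty n A -> nonempty n B -> disjoint n A B ->
  (is_singleton n A k /\ is_singleton n B l) \/ (is_singleton n A l /\ is_singleton n B k).
Proof.
  intros HAkl HBkl [a [Ha HAa]] [b [Hb HBb]] Hdis.
  assert (Hab : a <> b).
  { intros <-. specialize (Hdis a Ha). rewrite HAa, HBb in Hdis. discriminate. }
  assert (SA : is_singleton n A a).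
  { intros i Hi. split; [|intros ->; exact HAa]. intros HAi.
    assert (i <> b) by (intros ->; specialize (Hdis b Hb); rewrite HAi, HBb in Hdis; discriminate).
    destruct (HAkl i Hi HAi), (HAkl a Ha HAa), (HBkl b Hb HBb); lia. }
  assert (SB : is_singleton n B b).
  { intros i Hi. split; [|intros ->; exact HBb]. intros HBi.
    assert (i <> a) by (intros ->; specialize (Hdis a Ha); rewrite HAa, HBi in Hdis; discriminate).
    destruct (HBkl i Hi HBi), (HAkl a Ha HAa), (HBkl b Hb HBb); lia. }
  destruct (HAkl a Ha HAa) as [->| ->]; destruct (HBkl b Hb HBb) as [->| ->];
    first [left; split; assumption | right; split; assumption | exfalso; apply Hab; reflexivity].
Qed.

Definition P0 (n : nat) : mat := fun i j =>
  if Nat.eqb i 1 then (if Nat.eqb 0 j then 1 else 0)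
  else if Nat.eqb i 2 then (if orb (Nat.eqb 1 j) (Nat.eqb 2 j) then /2 else 0)
  else / INR n.

Lemma P0_stochastic n : (3 <= n)%nat -> stochastic n (P0 n).
Proof.
  intros Hn. assert (Hpos : 0 < INR n) by (apply lt_0_INR; lia). split.
  - intros i j _ _. unfold P0. destruct (Nat.eqb i 1); [destruct (Nat.eqb 0 j); lra|].
    destruct (Nat.eqb i 2); [destruct (_ || _); lra|]. left. apply Rinv_0_lt_compat. exact Hpos.
  - intros i Hi. unfold P0. destruct (Nat.eqb i 1); [apply rsum_indicator; lia|].
    destruct (Nat.eqb i 2).
    + rewrite (rsum_ext n _ (fun k => (if Nat.eqb 1 k then 1 else 0) * /2
                                      + (if Nat.eqb 2 k then 1 else 0) * /2)).
      * rewrite rsum_plus, (rsum_kronecker n 1 (fun _ => /2)), (rsum_kronecker n 2 (fun _ => /2))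
          by lia. lra.
      * intros k _. destruct (Nat.eqb_spec 1 k), (Nat.eqb_spec 2 k); simpl; try lia; lra.
    + rewrite rsum_const. field. lra.
Qed.

Lemma P0_row1_pos n j : 0 < P0 n 1%nat j <-> j = 0%nat.
Proof.
  unfold P0. change (Nat.eqb 1 1) with true. cbv beta iota.
  destruct (Nat.eqb_spec 0 j); split; intros; first [lra|lia].
Qed.

Lemma P0_row2_pos n j : 0 < P0 n 2%nat j <-> (j = 1 \/ j = 2)%nat.
Proof.
  unfold P0. change (Nat.eqb 2 1) with false. change (Nat.eqb 2 2) with true. cbv beta iota.
  destruct (Nat.eqb_spec 1 j), (Nat.eqb_spec 2 j); simpl; split; intros; first [lra|lia].
Qed.

Lemma P0_other_row_pos n i j : (0 < n)%nat -> i <> 1%nat -> i <> 2%nat -> 0 < P0 n i j.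
Proof.
  intros Hn H1 H2. unfold P0.
  destruct (Nat.eqb_spec i 1); [contradiction|]. destruct (Nat.eqb_spec i 2); [contradiction|].
  apply Rinv_0_lt_compat, lt_0_INR. exact Hn.
Qed.

Lemma F_P0_singletons n X Y : (3 <= n)%nat -> is_singleton n X 1 -> is_singleton n Y 2 ->
  (forall j, (j < n)%nat -> F n (P0 n) X j = true <-> j = 0%nat) /\
  (forall j, (j < n)%nat -> F n (P0 n) Y j = true <-> (j = 1 \/ j = 2)%nat).
Proof.
  intros Hn HX HY. split; intros j Hj.
  - rewrite (F_singleton n _ X 1) by first [lia|exact HX]. rewrite P0_row1_pos. tauto.
  - rewrite (F_singleton n _ Y 2) by first [lia|exact HY]. rewrite P0_row2_pos. tauto.
Qed.

Lemma P0_singleton_images_disjoint n X Y : (3 <= n)%nat ->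
  is_singleton n X 1 -> is_singleton n Y 2 -> disjoint n (F n (P0 n) X) (F n (P0 n) Y).
Proof.
  intros Hn HX HY j Hj. destruct (F_P0_singletons n X Y Hn HX HY) as [FX FY].
  destruct (F n (P0 n) X j) eqn:E1; [|reflexivity].
  destruct (F n (P0 n) Y j) eqn:E2; [|reflexivity].
  apply (FX j Hj) in E1. apply (FY j Hj) in E2. lia.
Qed.

Lemma P0_pair_singletons n X Y : (3 <= n)%nat ->
  is_singleton n X 1 -> is_singleton n Y 2 -> sarymsakov_pair n (P0 n) X Y.
Proof.
  intros Hn HX HY. destruct (F_P0_singletons n X Y Hn HX HY) as [FX FY].
  right. split; [exact (empty_inter_of_disjoint _ _ _ (P0_singleton_images_disjoint n X Y Hn HX HY))|].
  apply card_lt.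
  - intros i Hi HXY. unfold union in *. apply orb_true_iff in HXY. apply orb_true_iff.
    right. apply (FY i Hi).
    destruct HXY as [H|H]; [left; apply (HX i Hi)|right; apply (HY i Hi)]; exact H.
  - exists 0%nat. split; [lia|]. unfold union. split.
    + apply orb_true_iff. left. apply (FX 0%nat); [lia|reflexivity].
    + destruct (X 0%nat) eqn:E1; [pose proof (proj1 (HX 0%nat ltac:(lia)) E1); lia|].
      destruct (Y 0%nat) eqn:E2; [pose proof (proj1 (HY 0%nat ltac:(lia)) E2); lia|].
      reflexivity.
Qed.

Lemma P0_pair_of_other_row n X Y i : (3 <= n)%nat -> (i < n)%nat -> X i = true ->
  i <> 1%nat -> i <> 2%nat -> nonempty n Y -> sarymsakov_pair n (P0 n) X Y.
Proof.
  intros Hn Hi HXi H1 H2 HY. left.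
  destruct (F_nonempty n (P0 n) Y (P0_stochastic n Hn) HY) as [j [Hj HFj]].
  exists j. split; [exact Hj|]. change (F n (P0 n) X j && F n (P0 n) Y j = true).
  rewrite HFj, andb_true_r. apply F_spec. split; [exact Hj|].
  exists i. repeat split; try assumption. apply P0_other_row_pos; [lia|assumption|assumption].
Qed.

Lemma P0_S1 n : (3 <= n)%nat -> S1 n (P0 n).
Proof.
  intros Hn. split; [exact (P0_stochastic n Hn)|]. intros A At HA HAt Hdis.
  change (sarymsakov_pair n (P0 n) A At).
  assert (Hin12 : forall X, ~ (exists i, (i < n)%nat /\ X i = true /\ i <> 1%nat /\ i <> 2%nat) ->
                  forall i, (i < n)%nat -> X i = true -> (i = 1 \/ i = 2)%nat).
  { intros X HX i Hi HXi. destruct (Nat.eq_dec i 1); [left; assumption|].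
    destruct (Nat.eq_dec i 2); [right; assumption|].
    exfalso. apply HX. exists i. repeat split; assumption. }
  destruct (classic (exists i, (i < n)%nat /\ A i = true /\ i <> 1%nat /\ i <> 2%nat))
    as [[i [Hi [HAi [H1 H2]]]]|HA12].
  { exact (P0_pair_of_other_row n A At i Hn Hi HAi H1 H2 HAt). }
  destruct (classic (exists i, (i < n)%nat /\ At i = true /\ i <> 1%nat /\ i <> 2%nat))
    as [[i [Hi [HAti [H1 H2]]]]|HAt12].
  { exact (sarymsakov_pair_sym _ _ _ _ (P0_pair_of_other_row n At A i Hn Hi HAti H1 H2 HA)). }
  destruct (disjoint_split_pair n 1 2 A At (Hin12 A HA12) (Hin12 At HAt12) HA HAt Hdis)
    as [[SA SAt]|[SA SAt]].
  - exact (P0_pair_singletons n A At Hn SA SAt).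
  - exact (sarymsakov_pair_sym _ _ _ _ (P0_pair_singletons n At A Hn SAt SA)).
Qed.

Lemma P0_not_G n : (3 <= n)%nat -> ~ G n (P0 n).
Proof.
  intros Hn HG.
  assert (HX1 : is_singleton n (Nat.eqb 1) 1) by (intros i _; rewrite Nat.eqb_eq; lia).
  assert (HY2 : is_singleton n (Nat.eqb 2) 2) by (intros i _; rewrite Nat.eqb_eq; lia).
  destruct (F_P0_singletons n _ _ Hn HX1 HY2) as [FX _].
  destruct (G_image_covers n (P0 n) (Nat.eqb 1) (Nat.eqb 2) HG
              (P0_singleton_images_disjoint n _ _ Hn HX1 HY2)) as [Hcov|Hcov].
  - pose proof (proj1 (FX 1%nat ltac:(lia)) (Hcov 1%nat ltac:(lia) eq_refl)). lia.
  - pose proof (proj1 (FX 2%nat ltac:(lia)) (Hcov 2%nat ltac:(lia) eq_refl)). lia.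
Qed.

Theorem proposition1 (n : nat) (hn : (3 <= n)%nat) :
  (forall P : mat, G n P -> S1 n P) /\
  (exists P : mat, S1 n P /\ ~ G n P).
Proof.
  split.
  - exact (G_subset_S1 n).
  - exists (P0 n). split; [exact (P0_S1 n hn)|exact (P0_not_G n hn)].
Qed.
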